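(* Let $k$ be a field of characteristic zero and let $(A,M)$ be a finite dimensional Gorenstein local commutative $k$-algebra which is not a principal ideal algebra. Then every $k$-algebra homomorphism from $A$ into a principal ideal $k$-algebra maps the socle $\operatorname{soc}(A)=\{a\in A: aM=0\}$ to zero. In particular, there is no injective $k$-algebra homomorphism from $A$ into a principal ideal algebra.
   Context: All algebras are commutative, unital and finite dimensional over $k$. A principal ideal algebra is a finite dimensional commutative $k$-algebra in which every ideal is principal. A finite dimensional local algebra $(A,M)$ is called Gorenstein if $\dim_k\operatorname{soc}(A)=1$, where $\operatorname{soc}(A)$ is the annihilator of $M$. *)

From HB Require Import structures.
From mathcomp Require Import all_boot all_order all_algebra all_field.
Set Implicit Arguments. Unset Strict Implicit. Unset Printing Implicit Defensive.
Import GRing.Theory.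
Local Open Scope ring_scope.

(* Finite-dimensional unital K-algebras are [falgType K]; commutativity is an
   explicit hypothesis. Ideals are represented as predicates [A -> Prop]. *)
Section Defs.
Variable K : fieldType.
Variable A : falgType K.

Definition commutative_alg : Prop := forall x y : A, x * y = y * x.

Definition is_ideal (I : A -> Prop) : Prop :=
  [/\ I 0, (forall x y, I x -> I y -> I (x + y)) & (forall a x, I x -> I (a * x))].

Definition principal_ideal (I : A -> Prop) : Prop :=
  exists g : A, forall x, I x <-> exists a : A, x = a * g.

Definition principal_ideal_algebra : Prop :=
  forall I : A -> Prop, is_ideal I -> principal_ideal I.

Definition maximal_ideal (M : A -> Prop) : Prop :=
  [/\ is_ideal M, ~ M 1 &
      forall I : A -> Prop, is_ideal I -> (forall x, M x -> I x) -> ~ I 1 ->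
        forall x, I x -> M x].

Definition local_with (M : A -> Prop) : Prop :=
  maximal_ideal M /\
  forall M' : A -> Prop, maximal_ideal M' -> forall x, M' x <-> M x.

Definition socle (M : A -> Prop) (x : A) : Prop :=
  forall m, M m -> x * m = 0.

Definition gorenstein (M : A -> Prop) : Prop :=
  exists S : {vspace A}, (forall x, x \in S <-> socle M x) /\ \dim S = 1%N.

End Defs.

From HB Require Import structures.
From mathcomp Require Import all_boot all_order all_algebra all_field.
From mathcomp Require Import zify ring.
From Stdlib Require Import Classical.
Set Implicit Arguments. Unset Strict Implicit. Unset Printing Implicit Defensive.
Import GRing.Theory.
Local Open Scope ring_scope.

(* Write soc(A) = k s. In the local Gorenstein algebra A every nonzero element
   divides s, so for a functional phi with phi s <> 0 the form
   (h, c) |-> phi (h c) is nondegenerate, and duality gives Ann (Ann g) = (g).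
   Were the annihilators of A totally ordered, an element of an ideal I with
   smallest annihilator would generate I; as A is not principal there are
   x, y, p, q with p x = q y = 0 and p y = q x = s. In a principal ideal
   algebra write (X, Y) = (G) with G = u X + w Y, X = p' G, Y = q' G; then the
   images S of s satisfy S = u p' S = w q' S, whence S = (u p' + w q') S = 2 S
   and S = 0. *)

Lemma ex_argmin (T : Type) (P : T -> Prop) (f : T -> nat) (x : T) :
  P x -> exists2 y, P y & forall z, P z -> (f y <= f z)%N.
Proof.
have [n] := ubnP (f x); elim: n x => // n IH x lt_fx Px.
have [[z [Pz lt_zx]] | x_min] := classic (exists z, P z /\ (f z < f x)%N).
  by apply: (IH z) => //; apply: leq_trans lt_zx _; rewrite -ltnS.
exists x => // z Pz; rewrite leqNgt; apply/negP => lt_zx.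
by apply: x_min; exists z.
Qed.

Lemma functional_sep (K : fieldType) (V : vectType K) (W : {vspace V}) (z : V) :
  z \notin W -> exists2 psi : 'Hom(V, K^o),
    (forall w, w \in W -> psi w = 0) & psi z != 0.
Proof.
move=> zW; set v := z - projv W z.
have v_nz : v != 0.
  by apply: contraNneq zW => /eqP; rewrite subr_eq0 => /eqP ->; apply: memv_proj.
have /existsP[i ci] : [exists i, coord (vbasis {:V}) i v != 0].
  apply: contraNT v_nz => /existsPn all0.
  rewrite (coord_vbasis (memvf v)) big1 // => i _.
  by rewrite (eqP (negPn (all0 i))) scale0r.
exists (linfun (coord (vbasis {:V}) i : V -> K^o) \o (\1 - projv W))%VF.
  move=> w wW; rewrite comp_lfunE add_lfunE opp_lfunE id_lfunE projv_id //.
  by rewrite subrr linear0.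
by rewrite comp_lfunE add_lfunE opp_lfunE id_lfunE lfunE.
Qed.

Section Duality.
Variables (K : fieldType) (A : falgType K) (phi : 'Hom(A, K^o)).

Definition dual_mul (h : A) : 'Hom(A, K^o) := (phi \o amull h)%VF.

Lemma dual_mulE h c : dual_mul h c = phi (h * c).
Proof. by rewrite comp_lfunE lfunE. Qed.

Fact dual_mul_is_linear : linear dual_mul.
Proof.
move=> k x y; apply/lfunP => c.
by rewrite add_lfunE scale_lfunE !dual_mulE mulrDl -scalerAl linearP.
Qed.
HB.instance Definition _ := GRing.isSemilinear.Build K A 'Hom(A, K^o) _ dual_mul
  (GRing.semilinear_linear dual_mul_is_linear).

Lemma dual_mul_surj : (forall h, (forall c, phi (h * c) = 0) -> h = 0) ->
  forall psi : 'Hom(A, K^o), exists h, forall c, psi c = phi (h * c).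
Proof.
move=> nondeg psi; pose D := linfun dual_mul.
have kerD : lker D == 0%VS.
  apply/lker0P => h1 h2; rewrite !lfunE /= => eqD.
  apply/eqP; rewrite -subr_eq0; apply/eqP; apply: nondeg => c.
  by rewrite mulrBl linearB /= -!dual_mulE eqD subrr.
have imD : limg D = fullv.
  apply/eqP; rewrite eqEdim subvf /=.
  have := limg_ker_dim D fullv; rewrite (eqP kerD) capv0 dimv0 add0n => ->.
  by rewrite !dimvf; apply: eq_leq; exact: muln1.
have : psi \in limg D by rewrite imD memvf.
by case/memv_imgP=> h _ ->; exists h => c; rewrite lfunE dual_mulE.
Qed.

End Duality.

Section Ideals.
Variables (K : fieldType) (A : falgType K).
Implicit Types (I J : A -> Prop) (x y z : A).

Lemma ideal0 I : is_ideal I -> I 0.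
Proof. by case. Qed.

Lemma idealD I x y : is_ideal I -> I x -> I y -> I (x + y).
Proof. by case=> _ + _; apply. Qed.

Lemma idealM I a x : is_ideal I -> I x -> I (a * x).
Proof. by case=> _ _; apply. Qed.

Lemma idealZ I (k : K) x : is_ideal I -> I x -> I (k *: x).
Proof. by move=> II Ix; rewrite -mulr_algl; apply: idealM. Qed.

Lemma ann_is_ideal y : is_ideal (fun z => z * y = 0).
Proof.
split=> [|a b ay b_y|a b b_y]; first exact: mul0r.
  by rewrite mulrDl ay b_y addr0.
by rewrite -mulrA b_y mulr0.
Qed.

Definition ideal2 x y z : Prop := exists u w, z = u * x + w * y.

Lemma ideal2_is_ideal x y : is_ideal (ideal2 x y).
Proof.
split=> [|a b [u1 [w1 ->]] [u2 [w2 ->]]|a b [u [w ->]]].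
- by exists 0, 0; rewrite !mul0r addr0.
- by exists (u1 + u2), (w1 + w2); rewrite !mulrDl addrACA.
- by exists (a * u), (a * w); rewrite mulrDr !mulrA.
Qed.

Lemma maximal_ideal_sup J : is_ideal J -> ~ J 1 ->
  exists2 N, maximal_ideal N & forall x, J x -> N x.
Proof.
move=> IJ nJ1.
(* Ideals are mere predicates, so each one carries a subspace U of it; a pair
   minimising the codimension of U is maximal, since a larger proper ideal
   would contain U + <[x]>. *)
pose P (IU : (A -> Prop) * {vspace A}) := [/\ is_ideal IU.1, ~ IU.1 1,
  forall x, J x -> IU.1 x & forall u, u \in IU.2 -> IU.1 u].
have P0 : P (J, 0%VS) by split=> // u; rewrite memv0 => /eqP ->; apply: ideal0.
have [[I U] [II nI1 JI UI] Umax] :=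
  ex_argmin (fun IU => \dim {:A} - \dim IU.2)%N P0.
exists I => //; split=> // I' II' II'sub nI'1 x I'x.
apply: NNPP => nIx; have nUx : x \notin U by apply/negP => /UI.
have /Umax : P (I', U + <[x]>)%VS.
  split=> // [y /JI/II'sub //|u /memv_addP[u1 /UI/II'sub I'u1 [v /vlineP[k ->] ->]]].
  by apply: idealD => //; apply: idealZ.
have := dimvS (subvf (U + <[x]>)%VS).
have : (\dim U < \dim (U + <[x]>))%N.
  by rewrite (ltn_leqif (dimv_leqif_sup (addvSl U <[x]>))) subv_add subvv -memvE.
rewrite /=; lia.
Qed.

Lemma gorenstein_socle_line M : gorenstein M ->
  exists2 s : A, s != 0 & forall x, socle M x <-> exists k, x = k *: s.
Proof.
case=> S [socS dimS]; set s := vpick S.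
have s_nz : s != 0 by rewrite vpick0 -dimv_eq0 dimS.
have defS : S = <[s]>%VS.
  by apply/eqP; rewrite eq_sym eqEdim -memvE memv_pick dimS dim_vline s_nz.
exists s => // x; rewrite -socS defS; split=> [/vlineP|/vlineP] //.
Qed.

Definition ann_sub x y : Prop := forall h, h * x = 0 -> h * y = 0.

Lemma ann_subPn x y : ~ ann_sub x y -> exists2 h, h * x = 0 & h * y != 0.
Proof.
move=> nsub; apply: NNPP => nex; apply: nsub => h hx.
by have [//|hy] := eqVneq (h * y) 0; case: nex; exists h.
Qed.

Lemma mem_lker_amulr x h : (h \in lker (amulr x)) = (h * x == 0).
Proof. by rewrite memv_ker lfunE. Qed.

Lemma mul_memv_limg_amulr x a : a * x \in limg (amulr x).
Proof. by apply/memv_imgP; exists a; rewrite ?memvf ?lfunE. Qed.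

End Ideals.

Section Local.
Variables (K : fieldType) (A : falgType K) (M : A -> Prop).
Hypothesis Aloc : local_with M.
Implicit Types (J : A -> Prop) (x y z : A).

Lemma local_ideal0 : is_ideal M. Proof. by case: Aloc => [[]]. Qed.
Lemma local_notin1 : ~ M 1. Proof. by case: Aloc => [[]]. Qed.

Lemma proper_ideal_sub J : is_ideal J -> ~ J 1 -> forall x, J x -> M x.
Proof.
move=> IJ nJ1 x Jx; have [N maxN JN] := maximal_ideal_sup IJ nJ1.
by apply/(Aloc.2 N maxN); apply: JN.
Qed.

Lemma mul1BM_eq0 z y : M z -> (1 - z) * y = 0 -> y = 0.
Proof.
move=> Mz zy; have [//|y_nz] := eqVneq y 0; exfalso.
have M1z : M (1 - z).
  by apply: (proper_ideal_sub (ann_is_ideal y)) => // /eqP; rewrite mul1r (negPf y_nz).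
by apply: local_notin1; rewrite -(subrK z 1); apply: idealD local_ideal0 M1z Mz.
Qed.

End Local.

Section Gorenstein.
Variables (K : fieldType) (A : falgType K) (M : A -> Prop) (s : A).
Hypotheses (Acomm : commutative_alg A) (Aloc : local_with M).
Hypotheses (s_nz : s != 0) (socle_s : forall x, socle M x <-> exists k, x = k *: s).
Implicit Types (g x y z : A).

Lemma nonzero_dvd_socle y : y != 0 -> exists a, a * y = s.
Proof.
(* If y is not in the socle, some m in M has m y <> 0; then m y A is strictly
   smaller than y A, for equality would give (1 - b m) y = 0. *)
have [n] := ubnP (\dim (limg (amulr y))); elim: n y => // n IH y lt_yn y_nz.
have [/socle_s[k def_y] | not_soc_y] := classic (socle M y).
  have k_nz : k != 0 by apply: contraNneq y_nz => k0; rewrite def_y k0 scale0r.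
  by exists k^-1%:A; rewrite mulr_algl def_y scalerA mulVf // scale1r.
have [m Mm my_nz] : exists2 m, M m & m * y != 0.
  apply: NNPP => H; apply: not_soc_y => m Mm; rewrite Acomm.
  by have [//|my] := eqVneq (m * y) 0; case: H; exists m.
have sub_my : (limg (amulr (m * y)%R) <= limg (amulr y))%VS.
  by apply/subvP => _ /memv_imgP[c _ ->]; rewrite lfunE /= mulrA mul_memv_limg_amulr.
have [lt_my | ge_my] := ltnP (\dim (limg (amulr (m * y)))) (\dim (limg (amulr y))).
  have [a def_s] := IH (m * y) (leq_trans lt_my lt_yn) my_nz.
  by exists (a * m); rewrite -mulrA.
have : y \in limg (amulr (m * y)).
  have -> : limg (amulr (m * y)) = limg (amulr y) by apply/eqP; rewrite eqEdim sub_my.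
  by rewrite -[y in y \in _]mul1r mul_memv_limg_amulr.
case/memv_imgP=> b _; rewrite lfunE /= mulrA => def_y.
have Mbm : M (b * m) by apply: idealM (local_ideal0 Aloc) Mm.
suff y0 : y = 0 by rewrite y0 eqxx in y_nz.
by apply: (mul1BM_eq0 Aloc Mbm); rewrite mulrBl mul1r -def_y subrr.
Qed.

Lemma socle_form_nondeg (phi : 'Hom(A, K^o)) : phi s != 0 ->
  forall h, (forall c, phi (h * c) = 0) -> h = 0.
Proof.
move=> phi_s h phi_h; apply/eqP; apply: contraT => h_nz.
have [a def_s] := nonzero_dvd_socle h_nz.
by move: phi_s; rewrite -def_s Acomm phi_h eqxx.
Qed.

Lemma ann_sub_dvd g z : ann_sub g z -> exists a, z = a * g.
Proof.
move=> Ag_Az; apply: NNPP => not_dvd.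
have z_notin : z \notin limg (amulr g).
  by apply/negP => /memv_imgP[a _ def_z]; apply: not_dvd; exists a; rewrite def_z lfunE.
have [psi psi_g psi_z] := functional_sep z_notin.
have s_notin0 : s \notin (0 : {vspace A})%VS by rewrite memv0.
have [phi _ phi_s] := functional_sep s_notin0.
have [h def_psi] := dual_mul_surj (socle_form_nondeg phi_s) psi.
have hg : h * g = 0.
  apply: (socle_form_nondeg phi_s) => c.
  by rewrite -mulrA -def_psi Acomm psi_g // mul_memv_limg_amulr.
by move/eqP: psi_z; apply; rewrite def_psi Ag_Az // linear0.
Qed.

Lemma PIA_of_ann_total :
  (forall x y : A, ann_sub x y \/ ann_sub y x) -> principal_ideal_algebra A.
Proof.
move=> ann_total I II.
have [g Ig g_min] := ex_argmin (fun g => \dim (lker (amulr g))) (ideal0 II).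
exists g => x; split=> [Ix | [a ->]]; last exact: idealM.
apply: ann_sub_dvd; have [Ax_Ag|//] := ann_total x g.
have sub_ker : (lker (amulr x) <= lker (amulr g))%VS.
  by apply/subvP => h; rewrite !mem_lker_amulr => /eqP/Ax_Ag ->.
have eq_ker : lker (amulr x) = lker (amulr g).
  by apply/eqP; rewrite eqEdim sub_ker g_min.
by move=> h hg; apply/eqP; rewrite -mem_lker_amulr eq_ker mem_lker_amulr hg.
Qed.

Lemma not_PIA_socle_swap : ~ principal_ideal_algebra A ->
  exists x y p q : A, [/\ p * x = 0, p * y = s, q * y = 0 & q * x = s].
Proof.
move=> not_PIA.
have [x [y [not_xy not_yx]]] : exists x y, ~ ann_sub x y /\ ~ ann_sub y x.
  apply: NNPP => H; apply/not_PIA/PIA_of_ann_total => x y.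
  by apply: NNPP => nor; apply: H; exists x, y; split=> sub; apply: nor; [left|right].
have [a ax ay_nz] := ann_subPn not_xy.
have [b b_y bx_nz] := ann_subPn not_yx.
have [a' def_s] := nonzero_dvd_socle ay_nz.
have [b' def_s'] := nonzero_dvd_socle bx_nz.
exists x, y, (a' * a), (b' * b).
by rewrite -!mulrA ax b_y !mulr0.
Qed.

End Gorenstein.

Section PrincipalIdealAlgebra.
Variables (K : fieldType) (B : falgType K).
Hypotheses (Bcomm : commutative_alg B) (B_PIA : principal_ideal_algebra B).

HB.instance Definition _ := GRing.PzRing_hasCommutativeMul.Build B Bcomm.

Lemma PIA_swap_eq0 (X Y P Q S : B) :
  P * X = 0 -> P * Y = S -> Q * Y = 0 -> Q * X = S -> S = 0.
Proof.
move=> PX PY QY QX.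
have [G genG] := B_PIA (ideal2_is_ideal X Y).
have [u [w defG]] : ideal2 X Y G by apply/genG; exists 1; rewrite mul1r.
have [p defX] : exists p, X = p * G.
  by apply/genG; exists 1, 0; rewrite mul1r mul0r addr0.
have [q defY] : exists q, Y = q * G.
  by apply/genG; exists 0, 1; rewrite mul1r mul0r add0r.
have eG : (u * p + w * q) * G = G by rewrite mulrDl -!mulrA -defX -defY.
have upS : S = u * p * S.
  transitivity (Q * p * ((u * p + w * q) * G)); first by rewrite eG -mulrA -defX.
  transitivity (u * p * (Q * (p * G)) + w * p * (Q * (q * G))); first by ring.
  by rewrite -defX -defY QX QY mulr0 addr0.
have wqS : S = w * q * S.
  transitivity (P * q * ((u * p + w * q) * G)); first by rewrite eG -mulrA -defY.
  transitivity (u * q * (P * (p * G)) + w * q * (P * (q * G))); first by ring.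
  by rewrite -defX -defY PX PY mulr0 add0r.
have eS : (u * p + w * q) * (P * Y) = P * Y.
  by rewrite defY; transitivity (P * (q * ((u * p + w * q) * G))); [ring | rewrite eG].
have : S + S = 0 + S by rewrite add0r {1}upS {2}wqS -mulrDl -PY eS.
exact: addIr.
Qed.

End PrincipalIdealAlgebra.

Unset Implicit Arguments.

Theorem theorem3p1 (K : fieldType) (charK0 : [pchar K] =i pred0)
  (A : falgType K) (Acomm : commutative_alg A) (M : A -> Prop)
  (Aloc : local_with M) (Agor : gorenstein M)
  (notPIA : ~ principal_ideal_algebra A) :
  (forall (B : falgType K), commutative_alg B -> principal_ideal_algebra B ->
     forall (f : {lrmorphism A -> B}) (x : A), socle M x -> f x = 0)
  /\
  (forall (B : falgType K), commutative_alg B -> principal_ideal_algebra B ->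
     forall (f : {lrmorphism A -> B}), ~ injective f).
Proof.
have [s s_nz socle_s] := gorenstein_socle_line Agor.
have [x [y [p [q [px py qy qx]]]]] := not_PIA_socle_swap Acomm Aloc s_nz socle_s notPIA.
have f_s B (Bcomm : commutative_alg B) (B_PIA : principal_ideal_algebra B)
    (f : {lrmorphism A -> B}) : f s = 0.
  by apply: (PIA_swap_eq0 Bcomm B_PIA (X := f x) (Y := f y) (P := f p) (Q := f q));
    rewrite -rmorphM ?px ?py ?qy ?qx ?rmorph0.
split=> [B Bcomm B_PIA f _ /socle_s[k ->] | B Bcomm B_PIA f f_inj].
  by rewrite linearZ /= f_s // scaler0.
by move/eqP: s_nz; apply; apply: f_inj; rewrite f_s // rmorph0.
Qed.
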